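(* For every $r\in\mathbb N$ and every finite graph $G$, \[\mathrm{adm}_r(G)+1\le \mathrm{copw}_r(G)\le \mathrm{wcol}_{2r}(G)+1.\]
   Context: Graphs are finite, simple, undirected. For $r\in\mathbb N$ and $k\ge 1$, the Cops and Robber game of radius $r$ and width $k$ on $G$: let $S_0=\emptyset$ and let the robber choose $v_0\in V(G)$; in round $i\ge1$ the cops announce $S_i\subseteq V(G)$ with $|S_i|\le k$, and then the robber moves from $v_{i-1}$ to $v_i$ along a path of length at most $r$ (length $0$ allowed) containing no vertex of $S_{i-1}\cap S_i$. The cops win if $v_i\in S_i$ for some $i$. $\mathrm{copw}_r(G)$ is the least $k$ for which the cops have a winning strategy. The $r$-weak coloring number $\mathrm{wcol}_r(G)$ is the least $k$ such that there is a total order $<$ on $V(G)$ in which, for every vertex $v$, at most $k$ vertices $w<v$ are weakly $r$-reachable from $v$, i.e. there is a path of length at most $r$ from $v$ to $w$ on which $w$ is the $<$-smallest vertex. The $r$-admissibility $\mathrm{adm}_r(G)$ is the least $k$ such that there is a total order $<$ on $V(G)$ such that for every $v$ there are no more than $k$ paths of length at most $r$ starting at $v$, ending at some vertex $w<v$, and pairwise sharing only the vertex $v$. *)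

From mathcomp Require Import all_boot.
From Stdlib Require Import ClassicalEpsilon.

Set Implicit Arguments.
Unset Strict Implicit.
Unset Printing Implicit Defensive.

(* The least natural number satisfying P (chosen classically; it is the
   genuine minimum whenever some number satisfies P). *)
Definition least (P : nat -> Prop) : nat :=
  epsilon (inhabits 0) (fun n => P n /\ forall m, P m -> n <= m).

Section Graph.
Variables (T : finType) (e : rel T).

(* A (simple) path x :: s : consecutive vertices adjacent, no repetitions.
   Its length is size s, its vertex set is x :: s, its end is last x s. *)
Definition gpath (x : T) (s : seq T) : bool := path e x s && uniq (x :: s).

(* A total order on V(G) is encoded by an injective rank f : T -> nat,
   with w < v iff f w < f v. *)

Definition wreach (f : T -> nat) (r : nat) (v w : T) : Prop :=
  exists s : seq T, [/\ gpath v s, last v s = w, size s <= r &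
                        forall x, x \in v :: s -> f w <= f x].

Definition wcol_ok (r k : nat) : Prop :=
  exists f : T -> nat, injective f /\
    forall (v : T) (A : {set T}),
      (forall w, w \in A -> f w < f v /\ wreach f r v w) -> #|A| <= k.

Definition wcol (r : nat) : nat := least (wcol_ok r).

Definition adm_ok (r k : nat) : Prop :=
  exists f : T -> nat, injective f /\
    forall (v : T) (F : seq (seq T)),
      (forall s, s \in F -> [/\ gpath v s, size s <= r & f (last v s) < f v]) ->
      (forall i j, i < size F -> j < size F -> i != j ->
         forall x, x \in v :: nth [::] F i -> x \in v :: nth [::] F j -> x = v) ->
      size F <= k.

Definition adm (r : nat) : nat := least (adm_ok r).

Definition robber_move (r : nat) (X : {set T}) (a b : T) : Prop :=
  exists s : seq T, [/\ gpath a s, last a s = b, size s <= r &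
                        forall x, x \in a :: s -> x \notin X].

(* Cops' positions along a robber play v : nat -> T (v i = v_i), under the
   cop strategy sigma, which maps the history [v_0; ...; v_(i-1)] to S_i.
   S_0 is empty. *)
Definition cop_sets (sigma : seq T -> {set T}) (v : nat -> T) (i : nat) : {set T} :=
  if i is i'.+1 then sigma (mkseq v i) else set0.

Definition cops_win (r k : nat) : Prop :=
  exists sigma : seq T -> {set T},
    (forall h, #|sigma h| <= k) /\
    forall v : nat -> T,
      (forall i, robber_move r (cop_sets sigma v i :&: cop_sets sigma v i.+1)
                             (v i) (v i.+1)) ->
      exists i, 0 < i /\ v i \in cop_sets sigma v i.

Definition copw (r : nat) : nat := least (fun k => 1 <= k /\ cops_win r k).

End Graph.

From Stdlib Require Import ClassicalEpsilon.
From mathcomp Require Import all_boot boolp.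

(* Upper bound: fix an order witnessing wcol_(2r) <= k and let the cops always
   occupy the at most k + 1 vertices weakly 2r-reachable from the robber's
   current position.  If the robber moves along p and then along q, and u is the
   smallest vertex of q (start included), some vertex of p must be smaller than
   u: otherwise u is weakly 2r-reachable both from the start of p (along p ++ q)
   and from the start of q, so it is occupied in both rounds and q cannot pass
   it.  Hence every vertex of the i-th move has rank at least i, and the robber
   cannot keep moving forever.

   Lower bound: if every nonempty W contains a vertex v with at most k paths of
   length <= r into W - v pairwise meeting only in v, removing such vertices one
   after the other orders V(G) so as to witness adm_r <= k.  Otherwise some W
   has a fan of k + 1 such paths at each of its vertices, and a robber in W
   facing k + 1 cops can always stay put or flee along a path of the fan that
   misses the new cops. *)

Set Implicit Arguments.
Unset Strict Implicit.
Unset Printing Implicit Defensive.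

Lemma least_spec (P : nat -> Prop) :
  (exists n, P n) -> P (least P) /\ forall m, P m -> least P <= m.
Proof.
case=> n Pn; apply: (epsilon_spec (inhabits 0) (fun k => P k /\ forall m, P m -> k <= m)).
have exP : exists k, `[< P k >] by exists n; apply/asboolP.
case: (ex_minnP exP) => m /asboolP Pm m_min.
by exists m; split=> // m' /asboolP /m_min.
Qed.

Lemma last_mkseq (A : Type) (v : nat -> A) n x : last x (mkseq v n.+1) = v n.
Proof. by rewrite mkseqS last_rcons. Qed.

Section Graph.
Variables (T : finType) (e : rel T).

Lemma seq_argmin (f : T -> nat) x s :
  exists2 u, u \in x :: s & forall y, y \in x :: s -> f u <= f y.
Proof.
have x_in : x \in x :: s := mem_head x s.
by case: (arg_minnP (P := [pred y | y \in x :: s]) f x_in) => u; exists u.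
Qed.

Lemma path_shortcut v u s : path e v s -> u \in v :: s ->
  exists s', [/\ gpath e v s', last v s' = u, size s' <= size s &
                 {subset v :: s' <= v :: s}].
Proof.
move=> vs_path u_in.
have [p [p_path p_last p_size p_sub]] : exists p, [/\ path e v p, last v p = u,
    size p <= size s & {subset v :: p <= v :: s}].
  case: (eqVneq u v) => [->|u_neq_v].
    by exists [::]; split=> // x; rewrite mem_seq1 => /eqP ->; apply: mem_head.
  have u_s : u \in s by rewrite in_cons (negbTE u_neq_v) in u_in.
  case/splitPr: u_s vs_path => s1 s2; rewrite cat_path /= => /and3P [s1_path s1_u _].
  exists (rcons s1 u); split.
  - by rewrite rcons_path s1_path.
  - exact: last_rcons.
  - by rewrite size_rcons size_cat /= addnS ltnS leq_addr.
  - move=> x; rewrite -cats1 -!cat_cons !mem_cat => /orP [-> //|].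
    by rewrite mem_seq1 => /eqP ->; rewrite mem_head orbT.
subst u; case: (shortenP p_path) p_sub => s' s'_path s'_uniq s'_sub p_sub.
exists s'; split=> //.
- by rewrite /gpath s'_path.
- by apply: leq_trans p_size; apply: uniq_leq_size s'_sub; case/andP: s'_uniq.
- by move=> x /predU1P [->|/s'_sub x_p]; apply: p_sub; rewrite inE ?eqxx ?x_p ?orbT.
Qed.

Lemma wreach_walk f R v s u : path e v s -> size s <= R -> u \in v :: s ->
  (forall x, x \in v :: s -> f u <= f x) -> wreach e f R v u.
Proof.
move=> vs_path s_size u_in u_min.
have [s' [s'_gpath s'_last s'_size s'_sub]] := path_shortcut vs_path u_in.
exists s'; split=> //; first exact: leq_trans s'_size s_size.
by move=> x /s'_sub; apply: u_min.
Qed.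

Lemma wreach_min_cat f r a p q u :
  path e a p -> size p <= r -> path e (last a p) q -> size q <= r ->
  u \in last a p :: q -> (forall x, x \in a :: p ++ q -> f u <= f x) ->
  wreach e f (2 * r) a u /\ wreach e f (2 * r) (last a p) u.
Proof.
move=> p_path p_size q_path q_size u_in u_min.
have r_le_2r : r <= 2 * r by rewrite mul2n -addnn leq_addr.
have q_sub : {subset last a p :: q <= a :: p ++ q}.
  move=> x; rewrite in_cons -cat_cons mem_cat => /orP [/eqP ->|->].
    by rewrite mem_last.
  by rewrite orbT.
split.
- apply: wreach_walk u_min; first by rewrite cat_path p_path.
  + by rewrite size_cat mul2n -addnn leq_add.
  + exact: q_sub.
- apply: wreach_walk q_path (leq_trans q_size r_le_2r) u_in _.
  by move=> x /q_sub; apply: u_min.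
Qed.

Definition wreach_set f R v : {set T} := [set w | `[< wreach e f R v w >]].

Lemma wreach_setP f R v w : reflect (wreach e f R v w) (w \in wreach_set f R v).
Proof. by rewrite inE; apply: asboolP. Qed.

Lemma card_wreach_set f R k v : injective f ->
  (forall A : {set T}, (forall w, w \in A -> f w < f v /\ wreach e f R v w) ->
     #|A| <= k) ->
  #|wreach_set f R v| <= k.+1.
Proof.
move=> f_inj wcol_v; rewrite (cardsD1 v) -add1n leq_add ?leq_b1 //.
apply: wcol_v => w; rewrite in_setD1 => /andP [w_neq_v /wreach_setP w_wreach].
split=> //; case: (w_wreach) => s [_ _ _ /(_ v (mem_head v s))].
by rewrite leq_eqVlt => /predU1P [/f_inj eq_wv|//]; rewrite eq_wv eqxx in w_neq_v.
Qed.

Definition wreach_strategy f R (h : seq T) : {set T} :=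
  if h is x :: h' then wreach_set f R (last x h') else set0.

Lemma cop_sets_wreach_strategy f R (v : nat -> T) n :
  cop_sets (wreach_strategy f R) v n.+1 = wreach_set f R (v n).
Proof. by rewrite -(last_mkseq v n (v 0)). Qed.

Section WreachStrategy.
Variables (f : T -> nat) (r : nat) (v : nat -> T).
Let S := cop_sets (wreach_strategy f (2 * r)) v.
Hypothesis legal : forall i, robber_move e r (S i :&: S i.+1) (v i) (v i.+1).

Lemma robber_rank_grows i s :
  gpath e (v i) s -> last (v i) s = v i.+1 -> size s <= r ->
  (forall x, x \in v i :: s -> x \notin S i :&: S i.+1) ->
  forall x, x \in v i :: s -> i <= f x.
Proof.
elim: i s => [//|i IH] q /andP [q_path _] q_last q_size q_free z z_in.
case: (legal i) => p [p_gpath p_last p_size p_free].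
have [u u_in u_min] := seq_argmin f (v i.+1) q.
have [y y_in y_min] := seq_argmin f (v i) p.
have y_lt_u : f y < f u.
  rewrite ltnNge; apply/negP => u_le_y.
  have p_path : path e (v i) p by case/andP: p_gpath.
  have u_min_pq : forall x, x \in v i :: p ++ q -> f u <= f x.
    move=> x; rewrite -cat_cons mem_cat => /orP [/y_min|x_q]; first exact: leq_trans.
    by apply: u_min; rewrite in_cons x_q orbT.
  move: q_path (u_in); rewrite -p_last => q_path u_in_q.
  have [u_i u_i1] := wreach_min_cat p_path p_size q_path q_size u_in_q u_min_pq.
  rewrite p_last in u_i1; have /negP := q_free u u_in; apply.
  by rewrite /S !cop_sets_wreach_strategy in_setI; apply/andP; split; apply/wreach_setP.
have := IH p p_gpath p_last p_size p_free y y_in.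
by move/leq_ltn_trans/(_ y_lt_u)/leq_trans; apply; apply: u_min.
Qed.

Lemma wreach_strategy_no_infinite_play : False.
Proof.
case: (legal (\max_x f x).+1) => s [s_gpath s_last s_size s_free].
have := robber_rank_grows s_gpath s_last s_size s_free (mem_head _ _).
by rewrite ltnNge leq_bigmax.
Qed.

End WreachStrategy.

Lemma cops_win_of_wcol_ok r k : wcol_ok e (2 * r) k -> cops_win e r k.+1.
Proof.
case=> f [f_inj f_wcol]; exists (wreach_strategy f (2 * r)); split.
  by case=> [|x h] /=; rewrite ?cards0 // (card_wreach_set f_inj (f_wcol _)).
by move=> v legal; case: (wreach_strategy_no_infinite_play legal).
Qed.

Definition fan r v (W : {set T}) (F : seq (seq T)) : Prop :=
  (forall s, s \in F -> [/\ gpath e v s, size s <= r & last v s \in W]) /\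
  (forall i j, i < size F -> j < size F -> i != j ->
     forall x, x \in v :: nth [::] F i -> x \in v :: nth [::] F j -> x = v).

Definition fan_bounded r k v W : Prop := forall F, fan r v W F -> size F <= k.

Lemma fan_bounded_subset r k v (W W' : {set T}) :
  W' \subset W -> fan_bounded r k v W -> fan_bounded r k v W'.
Proof.
move=> /subsetP W'_sub W_bounded F [F_paths F_disj]; apply: W_bounded; split=> //.
by move=> s /F_paths [s_gpath s_size /W'_sub].
Qed.

Lemma fan_path_avoiding r v W F (Y : {set T}) :
  fan r v W F -> #|Y :\ v| < size F -> exists2 s, s \in F & ~~ has (mem Y) s.
Proof.
move=> [F_paths F_disj] Y_small.
have [F_hit|/allPn [s s_F s_free]] := boolP (all (has (mem Y)) F); last by exists s.
pose s_ (i : 'I_(size F)) := nth [::] F i.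
have s_F i : s_ i \in F := mem_nth [::] (ltn_ord i).
have s_Y i : has (mem Y) (s_ i) by apply: (allP F_hit).
pose g i := nth v (s_ i) (find (mem Y) (s_ i)).
have g_s i : g i \in s_ i by rewrite mem_nth // -has_find.
have g_neq_v i : g i != v.
  have [/andP [_ /andP [v_s _]] _ _] := F_paths _ (s_F i).
  by apply: contraNneq v_s => <-; apply: g_s.
have g_inj : injective g.
  move=> i j g_ij; apply/eqP; apply: contraNT (g_neq_v i) => i_neq_j; apply/eqP.
  apply: (F_disj i j (ltn_ord i) (ltn_ord j) i_neq_j).
    by apply/orP; right; apply: g_s.
  by rewrite g_ij; apply/orP; right; apply: g_s.
have : #|[set g i | i in 'I_(size F)]| <= #|Y :\ v|.
  apply/subset_leq_card/subsetP => _ /imsetP [i _ ->].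
  by rewrite in_setD1 g_neq_v; apply: (nth_find v (s_Y i)).
by rewrite card_imset // card_ord leqNgt Y_small.
Qed.

Lemma robber_escape r k (U X Y : {set T}) v F :
  v \in U -> v \notin X -> #|Y| <= k.+1 -> fan r v (U :\ v) F -> k < size F ->
  exists w, [/\ w \in U, w \notin Y & robber_move e r (X :&: Y) v w].
Proof.
move=> v_U v_X Y_card F_fan F_size.
have [v_Y|v_Y] := boolP (v \in Y); last first.
  exists v; split=> //; exists [::]; split=> // x; rewrite mem_seq1 => /eqP ->.
  by rewrite in_setI (negbTE v_X).
have [s s_F s_free] : exists2 s, s \in F & ~~ has (mem Y) s.
  apply: fan_path_avoiding F_fan _; apply: leq_trans F_size.
  by move: Y_card; rewrite (cardsD1 v) v_Y.
have [s_gpath s_size] := F_fan.1 s s_F; rewrite in_setD1 => /andP [w_neq_v w_U].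
have w_s : last v s \in s.
  by move: w_neq_v; case: (s) => [|x s'] /=; rewrite ?eqxx // => _; apply: mem_last.
have s_avoids x : x \in s -> x \notin Y.
  by move=> x_s; apply: contra s_free => x_Y; apply/hasP; exists x.
exists (last v s); split=> //; first exact: s_avoids.
exists s; split=> // x; rewrite in_setI negb_and in_cons => /predU1P [->|/s_avoids ->].
  by rewrite v_X.
by rewrite orbT.
Qed.

Lemma robber_evades r k (U : {set T}) : U != set0 ->
  (forall v (X Y : {set T}), v \in U -> v \notin X -> #|Y| <= k ->
     exists w, [/\ w \in U, w \notin Y & robber_move e r (X :&: Y) v w]) ->
  ~ cops_win e r k.
Proof.
case/set0Pn => v0 v0_U escape [sigma [sigma_card sigma_wins]].
pose safe_move (v : T) (X Y : {set T}) w :=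
  [/\ w \in U, w \notin Y & robber_move e r (X :&: Y) v w].
pose next v X Y := epsilon (inhabits v0) (safe_move v X Y).
have nextP v (X Y : {set T}) : v \in U -> v \notin X -> #|Y| <= k -> safe_move v X Y (next v X Y).
  by move=> v_U v_X Y_card; apply: (epsilon_spec (inhabits v0) (safe_move v X Y)); apply: escape.
(* [play n] = (S_n, [:: v_0; ...; v_n]): the next move must avoid both S_n and
   S_(n+1) = sigma [:: v_0; ...; v_n]. *)
pose fix play n : {set T} * seq T :=
  if n is n'.+1 then
    let: (X, h) := play n' in (sigma h, rcons h (next (last v0 h) X (sigma h)))
  else (set0, [:: v0]).
pose vv n := last v0 (play n).2.
have playE n : play n = (cop_sets sigma vv n, mkseq vv n.+1).
  elim: n => [//|n IH]; rewrite /= IH (mkseqS vv n.+1); congr (_, rcons _ _).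
  by rewrite /vv /= IH /= last_rcons.
have vvS n : vv n.+1 = next (vv n) (cop_sets sigma vv n) (cop_sets sigma vv n.+1).
  by rewrite /vv /= playE /= last_rcons.
have stepP n : vv n \in U -> vv n \notin cop_sets sigma vv n ->
    safe_move (vv n) (cop_sets sigma vv n) (cop_sets sigma vv n.+1) (vv n.+1).
  by move=> vv_U vv_free; rewrite vvS; apply: nextP vv_U vv_free (sigma_card _).
have safe n : vv n \in U /\ vv n \notin cop_sets sigma vv n.
  elim: n => [|n [vv_U vv_free]]; first by rewrite inE.
  by case: (stepP n vv_U vv_free).
have legal n : robber_move e r (cop_sets sigma vv n :&: cop_sets sigma vv n.+1) (vv n) (vv n.+1).
  by case: (safe n) => vv_U vv_free; case: (stepP n vv_U vv_free).
have [i [_ caught]] := sigma_wins vv legal.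
by case: (safe i); rewrite caught.
Qed.

Lemma index_rcons_lt (s : seq T) x w n :
  n <= size s -> index w (rcons s x) < n -> w \in s /\ index w s < n.
Proof.
rewrite -cats1 index_cat; case: ifP => [//|_] n_le lt_n.
by move: (leq_ltn_trans (leq_addr _ _) lt_n); rewrite ltnNge n_le.
Qed.

Section Peeling.
Variables (r k : nat).
Hypothesis peel :
  forall W : {set T}, W != set0 -> exists2 v, v \in W & fan_bounded r k v (W :\ v).

Lemma peeling_order (U : {set T}) : exists s, [/\ uniq s, s =i U &
  forall u, u \in s -> fan_bounded r k u [set w | index w s < index u s]].
Proof.
have [n] := ubnP #|U|; elim: n U => // n IH U U_card.
have [->|U_ne] := eqVneq U set0; first by exists [::]; split=> // x; rewrite inE.
have [v v_U v_bounded] := peel U_ne.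
have U'_card : #|U :\ v| < n by move: U_card; rewrite (cardsD1 v) v_U.
have [s [s_uniq s_U s_bounded]] := IH _ U'_card.
have v_s : v \notin s by rewrite s_U setD11.
have index_v : index v (rcons s v) = size s.
  by rewrite -cats1 index_cat (negbTE v_s) /= eqxx addn0.
exists (rcons s v); split.
- by rewrite rcons_uniq v_s.
- by move=> x; rewrite mem_rcons in_cons s_U in_setD1; case: eqVneq => [->|].
- move=> u; rewrite mem_rcons in_cons => /predU1P [->|u_s].
    apply: fan_bounded_subset v_bounded; apply/subsetP => w; rewrite inE index_v.
    by case/(index_rcons_lt (leqnn _)) => w_s _; rewrite -s_U.
  have index_u : index u (rcons s v) = index u s by rewrite -cats1 index_cat u_s.
  apply: fan_bounded_subset (s_bounded u u_s); apply/subsetP => w.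
  by rewrite !inE index_u => /(index_rcons_lt (index_size u s)) [].
Qed.

Lemma adm_ok_of_peeling : adm_ok e r k.
Proof.
have [s [_ s_T s_bounded]] := peeling_order [set: T].
have s_all x : x \in s by rewrite s_T inE.
exists (index^~ s); split.
  by move=> x y eq_xy; rewrite -(nth_index x (s_all x)) eq_xy nth_index.
move=> v F F_paths F_disj; apply: (s_bounded v (s_all v)); split=> // s0 s0_F.
by case: (F_paths _ s0_F) => ? ? ?; split; rewrite ?inE.
Qed.

End Peeling.

Lemma adm_ok_of_cops_win r k : cops_win e r k.+1 -> adm_ok e r k.
Proof.
move=> cops_k; apply: adm_ok_of_peeling => W W_ne; apply: contrapT => no_bounded.
apply: (robber_evades W_ne _ cops_k) => v X Y v_W v_X Y_card.
have [F F_fan F_size] : exists2 F, fan r v (W :\ v) F & k < size F.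
  apply: contrapT => no_fan; apply: no_bounded; exists v => // F F_fan.
  by rewrite leqNgt; apply/negP => F_size; apply: no_fan; exists F.
exact: robber_escape v_W v_X Y_card F_fan F_size.
Qed.

Lemma cops_win_everywhere r : cops_win e r #|T|.+1.
Proof.
exists (fun _ => setT); split=> [_|v _]; first by rewrite cardsT.
by exists 1; rewrite inE.
Qed.

Lemma wcol_ok_card R : wcol_ok e R #|T|.
Proof.
exists (fun x => val (enum_rank x)); split=> [x y /val_inj /enum_rank_inj //|v A _].
exact: max_card.
Qed.

Lemma copw_spec r :
  [/\ 0 < copw e r, cops_win e r (copw e r) &
      forall k, 0 < k -> cops_win e r k -> copw e r <= k].
Proof.
have exP : exists k, 0 < k /\ cops_win e r k.
  by exists #|T|.+1; split=> //; apply: cops_win_everywhere.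
have [[copw_gt0 copw_wins] copw_min] := least_spec exP.
by split=> // k k_gt0 cops_k; apply: copw_min.
Qed.

Lemma adm_le r k : adm_ok e r k -> adm e r <= k.
Proof. by move=> adm_k; apply: (least_spec (ex_intro _ _ adm_k)).2. Qed.

Lemma wcol_ok_wcol R : wcol_ok e R (wcol e R).
Proof. exact: (least_spec (ex_intro _ _ (wcol_ok_card R))).1. Qed.

End Graph.

Theorem mainTheorem2 (T : finType) (e : rel T)
    (e_sym : symmetric e) (e_irr : irreflexive e) (r : nat) :
  adm e r + 1 <= copw e r <= wcol e (2 * r) + 1.
Proof.
have [copw_gt0 copw_wins copw_min] := copw_spec e r.
rewrite !addn1; apply/andP; split.
  move: copw_gt0 copw_wins; case: (copw e r) => [//|k] _ /adm_ok_of_cops_win.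
  exact: adm_le.
exact: copw_min (cops_win_of_wcol_ok (wcol_ok_wcol e (2 * r))).
Qed.
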